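(* There exists a set of $510$ unit vectors in $\mathbb{R}^{10}$ such that the inner product of any two distinct vectors lies in $\{0,\pm\tfrac16,\pm\tfrac14,\pm\tfrac13,\pm\tfrac12,-1\}$. In particular the kissing number in dimension $10$ is at least $510$.
   Context: The kissing number in dimension $d$ is the maximal number of unit vectors in $\mathbb{R}^d$ with pairwise inner products at most $1/2$. *)

From HB Require Import structures.
From mathcomp Require Import all_boot all_order all_algebra.
From mathcomp Require Import reals.
Set Implicit Arguments. Unset Strict Implicit. Unset Printing Implicit Defensive.
Import Order.TTheory GRing.Theory Num.Theory.
Local Open Scope ring_scope.

Definition dotp (R : realType) (n : nat) (u v : 'rV[R]_n) : R :=
  \sum_(k < n) u 0 k * v 0 k.

Definition allowed_ips (R : realType) : seq R :=
  [:: 0; 1/6; -(1/6); 1/4; -(1/4); 1/3; -(1/3); 1/2; -(1/2); -1].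

Definition kissing_config (R : realType) (n N : nat) (v : 'I_N -> 'rV[R]_n) : Prop :=
  (forall i, dotp (v i) (v i) = 1) /\
  (forall i j, i != j -> dotp (v i) (v j) <= 1/2).

Definition kissing_number_ge (R : realType) (n N : nat) : Prop :=
  exists v : 'I_N -> 'rV[R]_n, kissing_config v.

From HB Require Import structures.
From mathcomp Require Import all_boot all_order all_algebra.
From mathcomp Require Import reals.
From Stdlib Require Import ZArith.
From mathcomp Require Import ssrZ ring lra.
Set Implicit Arguments. Unset Strict Implicit. Unset Printing Implicit Defensive.
Import Order.TTheory GRing.Theory Num.Theory.
Local Open Scope ring_scope.

(* The 510 vectors have coordinates a_k / 12, with a_k integers, with respect
   to an orthogonal basis (e_k) of R^10 with |e_k|^2 = w_k / 32, where
   w = (32, 32, 32, 32, 32, 32, 24, 4, 8, 1).  All inner products are then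
   integers divided by 4608 = 12^2 * 32, so the theorem reduces to a finite
   computation on the integer Gram matrix, which is carried out by evaluation. *)

Lemma dotpC (R : realType) n (u v : 'rV[R]_n) : dotp u v = dotp v u.
Proof. by apply: eq_bigr => k _; rewrite mulrC. Qed.

Section WeightedRow.
Variables (R : realType) (n : nat) (w : 'I_n -> R).
Hypothesis w_ge0 : forall k, 0 <= w k.

Definition weighted_row (a : 'I_n -> R) : 'rV[R]_n :=
  \row_k (a k * Num.sqrt (w k)).

Lemma dotp_weighted_row a b :
  dotp (weighted_row a) (weighted_row b) = \sum_k a k * b k * w k.
Proof. by apply: eq_bigr => k _; rewrite !mxE mulrACA -expr2 sqr_sqrtr. Qed.

End WeightedRow.

Lemma allowed_ips_le_half (R : realType) (x : R) :
  x \in allowed_ips R -> x <= 1/2.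
Proof.
rewrite !inE => x_in.
repeat (case/orP: x_in => [/eqP-> | x_in]; first lra).
by move/eqP: x_in => ->; lra.
Qed.

Lemma kissing_config_inj (R : realType) n N (v : 'I_N -> 'rV[R]_n) :
  kissing_config v -> injective v.
Proof.
move=> [unit ip] i j vij; apply/eqP; apply: contraT => /ip.
by rewrite vij unit; lra.
Qed.

Definition Z_to_R (R : pzRingType) : {rmorphism Z -> R} := intr \o int_of_Z.
Arguments Z_to_R : simpl never.

Lemma Z_to_R_pos (R : pzRingType) p : Z_to_R R (Zpos p) = (Pos.to_nat p)%:R.
Proof. by []. Qed.

Lemma Z_to_R_neg (R : pzRingType) p : Z_to_R R (Zneg p) = - (Pos.to_nat p)%:R.
Proof. by rewrite -[Zneg p]/(- Zpos p) rmorphN. Qed.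

Lemma Z_to_R_ge0 (R : numDomainType) (z : Z) : 0 <= z -> 0 <= Z_to_R R z.
Proof. by case: z => // p _; apply: ler0n. Qed.

Definition weighted_dotZ (n : nat) (w a b : seq Z) : Z :=
  foldr (fun k s => a`_k * b`_k * w`_k + s) 0 (iota 0 n).

Lemma Z_to_R_weighted_dotZ (R : pzRingType) n w a b :
  Z_to_R R (weighted_dotZ n w a b) =
  \sum_(k < n) Z_to_R R a`_k * Z_to_R R b`_k * Z_to_R R w`_k.
Proof.
pose F k := Z_to_R R a`_k * Z_to_R R b`_k * Z_to_R R w`_k.
rewrite -(big_mkord xpredT F) /index_iota subn0 /weighted_dotZ.
elim: (iota 0 n) => [|k s IHs]; first by rewrite big_nil rmorph0.
by rewrite big_cons -IHs /F -!rmorphM -rmorphD.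
Qed.

Definition allowed_numerators : seq Z :=
  [:: 0; 768; -768; 1152; -1152; 1536; -1536; 2304; -2304; -4608]%Z.

Lemma allowed_ipsE (R : realType) :
  allowed_ips R = [seq Z_to_R R z / 4608%:R | z <- allowed_numerators].
Proof.
rewrite /allowed_numerators !map_cons !Z_to_R_neg !Z_to_R_pos rmorph0.
(* Evaluate [Pos.to_nat] on the literals, so that [field] sees numerals. *)
cbv [Pos.to_nat Pos.iter_op Nat.add].
by congr [:: _; _; _; _; _; _; _; _; _; _]; field.
Qed.

Definition kiss10_weights : seq Z := [:: 32; 32; 32; 32; 32; 32; 24; 4; 8; 1]%Z.

Definition kiss10_coords : seq (seq Z) := ([::
[:: 0; 3; (-3); 3; 0; (-3); 3; 9; (-18); 18];
[:: 6; 0; (-3); 6; 3; 3; 0; 12; (-6); 24];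
[:: 0; 3; 3; 0; 6; 3; 0; 18; (-12); 12];
[:: 0; 0; (-6); 0; 0; 0; 6; 18; 0; 36];
[:: 6; 0; (-3); (-6); 3; 3; 0; 12; (-6); 24];
[:: 0; 6; (-3); (-3); 6; 0; 6; 0; (-6); 24];
[:: 0; 3; (-3); (-3); 0; (-3); (-3); 27; (-6); 6];
[:: 6; 6; (-6); 0; 3; (-3); (-3); 3; (-6); 6];
[:: 0; 6; (-3); 3; 6; 0; 0; 18; 6; 12];
[:: 0; 0; (-3); 6; (-3); 3; 6; 18; (-6); (-12)];
[:: 6; 0; 0; 0; 0; 6; 0; 12; (-12); (-24)];
[:: 0; 6; 0; 3; 3; 3; 6; 0; (-12); (-24)];
[:: 0; 0; (-3); (-6); (-3); 3; 6; 18; (-6); (-12)];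
[:: 6; 3; (-6); (-3); 0; 3; 6; (-6); (-6); (-12)];
[:: 0; 3; (-3); 0; 3; 6; 9; 9; 6; (-6)];
[:: 0; 6; (-6); 0; (-3); (-3); 3; 9; (-6); (-30)];
[:: 6; 3; (-6); 3; 0; 3; 0; 12; 6; (-24)];
[:: 0; 6; 0; (-3); 3; 3; 0; 18; 0; (-36)];
[:: 0; 3; 3; 0; (-6); 3; 0; 18; (-12); 12];
[:: 6; 6; 0; 3; (-3); 3; 0; (-6); (-12); 12];
[:: 0; 6; 3; 6; 0; 6; 3; 9; 0; 18];
[:: 0; 6; (-3); (-3); (-6); 0; 6; 0; (-6); 24];
[:: 6; 3; (-3); 0; (-3); 6; 3; 3; 6; 30];
[:: 0; 6; 3; (-6); 0; 6; 3; 9; 0; 18];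
[:: 0; 6; (-3); 3; (-6); 0; 0; 18; 6; 12];
[:: 6; 6; 0; (-3); (-3); 3; (-6); 12; 0; 0];
[:: 0; 12; 0; 0; 0; 0; 0; 0; 0; 0];
[:: 0; (-3); (-6); (-3); 0; 3; 0; 0; (-18); 0];
[:: (-6); (-3); (-3); 0; 3; 6; 3; 15; (-6); 6];
[:: 0; 0; (-6); 3; 6; 6; 3; (-9); (-6); 6];
[:: 0; (-3); (-6); 3; 0; 3; (-6); 18; (-6); (-12)];
[:: (-6); 3; (-6); 6; 3; 0; 0; 6; (-6); (-12)];
[:: 0; 3; (-3); 0; 6; 3; (-6); 0; (-12); (-24)];
[:: 0; 0; (-12); 0; 0; 0; 0; 0; 0; 0];
[:: (-6); 3; (-6); (-6); 3; 0; 0; 6; (-6); (-12)];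
[:: 0; 0; (-6); (-3); 6; 6; (-3); 9; 6; (-6)];
[:: 0; (-3); (-3); 0; (-3); 6; (-3); 9; (-6); 42];
[:: (-6); 3; (-3); 3; 0; 3; 3; (-3); (-6); 42];
[:: 0; 3; 0; (-3); 3; 6; (-3); (-9); (-12); 30];
[:: 0; 3; (-6); 6; (-3); 0; (-6); 0; (-6); 24];
[:: (-6); 6; 0; 0; 0; 0; (-6); 6; (-12); 12];
[:: 0; 3; 0; 3; 3; 6; (-9); 9; 0; 18];
[:: 0; 3; (-6); (-6); (-3); 0; (-6); 0; (-6); 24];
[:: (-6); 3; (-3); (-3); 0; 3; (-3); 15; 6; 30];
[:: 0; 6; (-6); 0; 3; 3; (-3); (-9); 6; 30];
[:: 0; 0; (-6); 3; (-6); 6; 3; (-9); (-6); 6];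
[:: (-6); 3; 0; (-3); (-3); 6; 3; (-3); (-12); (-6)];
[:: 0; 0; 0; 0; 0; 12; 0; 0; 0; 0];
[:: 0; 3; (-3); 0; (-6); 3; (-6); 0; (-12); (-24)];
[:: (-6); 3; 0; 3; (-3); 6; (-3); 15; 0; (-18)];
[:: 0; 6; (-3); 6; 0; 6; (-3); (-9); 0; (-18)];
[:: 0; 0; (-6); (-3); (-6); 6; (-3); 9; 6; (-6)];
[:: (-6); 6; (-6); 0; (-3); 3; 3; (-3); 6; (-6)];
[:: 0; 6; (-3); (-6); 0; 6; (-3); (-9); 0; (-18)];
[:: 6; (-3); (-3); 3; 0; (-3); 9; 3; (-6); 6];
[:: 0; 0; 3; (-3); 3; (-3); 9; 9; (-12); (-6)];
[:: 6; (-3); 3; 0; 6; 3; 6; 12; 0; 0];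
[:: 6; 0; 0; 0; 0; (-6); 0; 12; (-12); (-24)];
[:: 0; 0; 3; 3; 3; (-3); 3; 27; 0; (-18)];
[:: 6; 3; 0; 6; 6; (-3); 3; 3; 0; (-18)];
[:: 6; (-3); (-3); (-3); 0; (-3); 3; 21; 6; (-6)];
[:: 0; 3; (-3); 0; 3; (-6); 9; 9; 6; (-6)];
[:: 6; 3; 0; (-6); 6; (-3); 3; 3; 0; (-18)];
[:: 6; 0; 3; (-3); (-3); (-3); 3; 3; (-12); 30];
[:: 0; 0; 6; 0; 0; 0; 6; 18; 0; 36];
[:: 6; 3; 3; 3; 3; 0; 6; (-6); 0; 36];
[:: 6; 0; 3; 3; (-3); (-3); (-3); 21; 0; 18];
[:: 0; 6; 3; 6; 0; (-6); 3; 9; 0; 18];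
[:: 6; 6; 6; 0; 3; (-3); (-3); 3; (-6); 6];
[:: 6; 3; (-3); 0; (-3); (-6); 3; 3; 6; 30];
[:: 0; 6; 3; (-6); 0; (-6); 3; 9; 0; 18];
[:: 6; 3; 3; (-3); 3; 0; 0; 12; 12; 24];
[:: 6; (-3); 3; 0; (-6); 3; 6; 12; 0; 0];
[:: 0; 3; 3; 3; (-3); 0; 12; 0; 0; 0];
[:: 6; 3; 6; (-3); 0; 3; 6; (-6); (-6); (-12)];
[:: 6; 3; 0; 6; (-6); (-3); 3; 3; 0; (-18)];
[:: 0; 6; 6; 0; (-3); (-3); 3; 9; (-6); (-30)];
[:: 6; 3; 6; 3; 0; 3; 0; 12; 6; (-24)];
[:: 6; 3; 0; (-6); (-6); (-3); 3; 3; 0; (-18)];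
[:: 0; 3; 3; (-3); (-3); 0; 6; 18; 12; (-12)];
[:: 6; 6; 0; 0; 0; 0; 6; (-6); 12; (-12)];
[:: 0; (-3); 0; 6; 6; (-3); (-3); 9; (-12); (-6)];
[:: 0; (-6); (-3); (-3); 6; 0; 6; 0; (-6); 24];
[:: (-6); (-3); (-3); 0; 3; (-6); 3; 15; (-6); 6];
[:: 6; (-6); (-6); 0; 3; (-3); (-3); 3; (-6); 6];
[:: 0; (-3); 0; (-6); 6; (-3); (-3); 9; (-12); (-6)];
[:: 0; (-6); (-3); 3; 6; 0; 0; 18; 6; 12];
[:: 0; 0; (-6); 3; 6; (-6); 3; (-9); (-6); 6];
[:: 0; 0; 0; 0; 12; 0; 0; 0; 0; 0];
[:: 0; 0; (-6); (-3); 6; (-6); (-3); 9; 6; (-6)];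
[:: 0; (-3); 3; 3; 3; 0; 0; 0; (-12); 48];
[:: 0; (-3); (-3); 0; (-3); (-6); (-3); 9; (-6); 42];
[:: 0; (-3); 3; (-3); 3; 0; (-6); 18; 0; 36];
[:: 0; 3; 0; (-3); 3; (-6); (-3); (-9); (-12); 30];
[:: 0; 0; (-3); 6; 3; (-3); 0; 0; 6; 48];
[:: (-6); 3; 3; 0; 6; (-3); 0; 6; 0; 36];
[:: 6; 0; 0; 0; 6; 0; (-6); (-6); 0; 36];
[:: 0; 3; 0; 3; 3; (-6); (-9); 9; 0; 18];
[:: 0; 0; (-3); (-6); 3; (-3); 0; 0; 6; 48];
[:: 0; (-6); 0; 3; 3; 3; 6; 0; (-12); (-24)];
[:: 0; (-6); (-6); 0; (-3); (-3); 3; 9; (-6); (-30)];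
[:: 0; (-6); 0; (-3); 3; 3; 0; 18; 0; (-36)];
[:: 0; 0; (-3); (-3); 3; (-3); 3; (-9); (-12); (-42)];
[:: 0; (-3); (-6); 6; 3; 0; 6; 0; 6; (-24)];
[:: (-6); 0; 0; 0; 6; 0; 6; 6; 0; (-36)];
[:: 6; (-3); (-3); 0; 6; 3; 0; (-6); 0; (-36)];
[:: 0; 0; (-3); 3; 3; (-3); (-3); 9; 0; (-54)];
[:: 0; (-3); (-6); (-6); 3; 0; 6; 0; 6; (-24)];
[:: (-6); (-3); 3; 3; (-3); 0; 6; 6; (-12); 12];
[:: 6; (-6); 0; 3; (-3); 3; 0; (-6); (-12); 12];
[:: 0; (-3); 6; (-3); 0; 3; 0; 0; (-18); 0];
[:: 0; (-6); 3; 6; 0; 6; 3; 9; 0; 18];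
[:: 0; 0; 0; 6; 0; 0; 6; (-18); (-12); 12];
[:: 0; 0; 6; 3; 6; 6; 3; (-9); (-6); 6];
[:: 0; (-3); 0; 6; (-6); (-3); (-3); 9; (-12); (-6)];
[:: 0; (-3); 6; 3; 0; 3; (-6); 18; (-6); (-12)];
[:: 0; 3; 3; 3; 0; (-3); (-3); (-9); (-18); (-18)];
[:: 0; 0; 0; 12; 0; 0; 0; 0; 0; 0];
[:: (-6); 3; 6; 6; 3; 0; 0; 6; (-6); (-12)];
[:: 6; 0; 3; 6; 3; 3; (-6); (-6); (-6); (-12)];
[:: 0; (-6); (-3); (-3); (-6); 0; 6; 0; (-6); 24];
[:: 0; (-6); 3; (-6); 0; 6; 3; 9; 0; 18];
[:: 0; 0; 0; (-6); 0; 0; 6; (-18); (-12); 12];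
[:: 0; (-3); (-3); 3; 0; 3; 9; (-9); 6; 30];
[:: (-6); 0; 3; (-3); 3; 3; 9; (-3); 0; 18];
[:: 6; (-3); 0; (-3); 3; 6; 3; (-15); 0; 18];
[:: 0; (-3); 0; (-6); (-6); (-3); (-3); 9; (-12); (-6)];
[:: 0; (-6); (-3); 3; (-6); 0; 0; 18; 6; 12];
[:: 0; 0; (-6); 3; (-6); (-6); 3; (-9); (-6); 6];
[:: (-6); (-3); 3; (-3); (-3); 0; 0; 24; 0; 0];
[:: (-6); 3; 0; (-3); (-3); (-6); 3; (-3); (-12); (-6)];
[:: (-6); 0; (-3); 6; (-3); (-3); 6; 6; 6; 12];
[:: 6; (-6); 0; (-3); (-3); 3; (-6); 12; 0; 0];
[:: 6; 0; (-3); (-3); (-3); (-3); (-3); (-15); (-12); (-6)];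
[:: 6; (-3); (-6); 6; (-3); 0; 0; (-6); 6; 12];
[:: (-6); 3; 6; (-6); 3; 0; 0; 6; (-6); (-12)];
[:: (-6); 0; 3; 3; 3; 3; 3; 15; 12; 6];
[:: (-6); 6; 0; 3; 3; (-3); 6; (-12); 0; 0];
[:: 6; 0; 3; (-6); 3; 3; (-6); (-6); (-6); (-12)];
[:: 6; (-3); 0; 3; 3; 6; (-3); 3; 12; 6];
[:: 6; 3; (-3); 3; 3; 0; 0; (-24); 0; 0];
[:: 0; 0; 6; (-3); 6; 6; (-3); 9; 6; (-6)];
[:: 0; 6; 3; (-3); 6; 0; 0; (-18); (-6); (-12)];
[:: 0; 3; 0; 6; 6; 3; 3; (-9); 12; 6];
[:: (-6); 3; 0; 3; (-3); (-6); (-3); 15; 0; (-18)];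
[:: 6; 0; (-3); 3; (-3); (-3); (-9); 3; 0; (-18)];
[:: 0; 3; 3; (-3); 0; (-3); (-9); 9; (-6); (-30)];
[:: 0; 0; 0; 6; 0; 0; (-6); 18; 12; (-12)];
[:: 0; 6; (-3); 6; 0; (-6); (-3); (-9); 0; (-18)];
[:: 0; 6; 3; 3; 6; 0; (-6); 0; 6; (-24)];
[:: (-6); 0; (-3); (-6); (-3); (-3); 6; 6; 6; 12];
[:: 6; (-3); (-6); (-6); (-3); 0; 0; (-6); 6; 12];
[:: 0; 0; 0; (-12); 0; 0; 0; 0; 0; 0];
[:: 0; (-3); (-3); (-3); 0; 3; 3; 9; 18; 18];
[:: 0; 3; (-6); (-3); 0; (-3); 6; (-18); 6; 12];
[:: 0; 3; 0; (-6); 6; 3; 3; (-9); 12; 6];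
[:: 0; 0; (-6); (-3); (-6); (-6); (-3); 9; 6; (-6)];
[:: 0; 0; 0; (-6); 0; 0; (-6); 18; 12; (-12)];
[:: 0; 6; (-3); (-6); 0; (-6); (-3); (-9); 0; (-18)];
[:: 0; 3; (-6); 3; 0; (-3); 0; 0; 18; 0];
[:: (-6); 6; 0; (-3); 3; (-3); 0; 6; 12; (-12)];
[:: 6; 3; (-3); (-3); 3; 0; (-6); (-6); 12; (-12)];
[:: 0; 3; 6; 6; (-3); 0; (-6); 0; (-6); 24];
[:: 0; 0; 3; (-3); (-3); 3; 3; (-9); 0; 54];
[:: (-6); 3; 3; 0; (-6); (-3); 0; 6; 0; 36];
[:: 6; 0; 0; 0; (-6); 0; (-6); (-6); 0; 36];
[:: 0; 3; 6; (-6); (-3); 0; (-6); 0; (-6); 24];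
[:: 0; 0; 3; 3; (-3); 3; (-3); 9; 12; 42];
[:: 0; 6; 0; 3; (-3); (-3); 0; (-18); 0; 36];
[:: 0; 6; 6; 0; 3; 3; (-3); (-9); 6; 30];
[:: 0; 6; 0; (-3); (-3); (-3); (-6); 0; 12; 24];
[:: 0; 0; 3; 6; (-3); 3; 0; 0; (-6); (-48)];
[:: 0; (-3); 0; (-3); (-3); 6; 9; (-9); 0; (-18)];
[:: (-6); 0; 0; 0; (-6); 0; 6; 6; 0; (-36)];
[:: 6; (-3); (-3); 0; (-6); 3; 0; (-6); 0; (-36)];
[:: 0; 0; 3; (-6); (-3); 3; 0; 0; (-6); (-48)];
[:: 0; (-3); 0; 3; (-3); 6; 3; 9; 12; (-30)];
[:: 0; 3; (-3); 3; (-3); 0; 6; (-18); 0; (-36)];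
[:: 0; 3; 3; 0; 3; 6; 3; (-9); 6; (-42)];
[:: 0; 3; (-3); (-3); (-3); 0; 0; 0; 12; (-48)];
[:: 0; 0; 6; 3; (-6); 6; 3; (-9); (-6); 6];
[:: 0; 0; 0; 0; (-12); 0; 0; 0; 0; 0];
[:: 0; 0; 6; (-3); (-6); 6; (-3); 9; 6; (-6)];
[:: 0; 6; 3; (-3); (-6); 0; 0; (-18); (-6); (-12)];
[:: 0; 3; 0; 6; (-6); 3; 3; (-9); 12; 6];
[:: (-6); 6; 6; 0; (-3); 3; 3; (-3); 6; (-6)];
[:: 6; 3; 3; 0; (-3); 6; (-3); (-15); 6; (-6)];
[:: 0; 6; 3; 3; (-6); 0; (-6); 0; 6; (-24)];
[:: 0; 3; 0; (-6); (-6); 3; 3; (-9); 12; 6];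
[:: (-6); (-6); 0; 0; 0; 0; (-6); 6; (-12); 12];
[:: 0; (-3); (-3); 3; 3; 0; (-6); (-18); (-12); 12];
[:: (-6); (-3); 0; 6; 6; 3; (-3); (-3); 0; 18];
[:: (-6); (-3); (-6); (-3); 0; (-3); 0; (-12); (-6); 24];
[:: 0; (-6); (-6); 0; 3; 3; (-3); (-9); 6; 30];
[:: (-6); (-3); 0; (-6); 6; 3; (-3); (-3); 0; 18];
[:: (-6); (-3); (-6); 3; 0; (-3); (-6); 6; 6; 12];
[:: 0; (-3); (-3); (-3); 3; 0; (-12); 0; 0; 0];
[:: (-6); 3; (-3); 0; 6; (-3); (-6); (-12); 0; 0];
[:: (-6); (-3); (-3); 3; (-3); 0; 0; (-12); (-12); (-24)];
[:: 0; (-6); (-3); 6; 0; 6; (-3); (-9); 0; (-18)];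
[:: (-6); (-3); 3; 0; 3; 6; (-3); (-3); (-6); (-30)];
[:: (-6); (-6); (-6); 0; (-3); 3; 3; (-3); 6; (-6)];
[:: 0; (-6); (-3); (-6); 0; 6; (-3); (-9); 0; (-18)];
[:: (-6); 0; (-3); (-3); 3; 3; 3; (-21); 0; (-18)];
[:: (-6); (-3); (-3); (-3); (-3); 0; (-6); 6; 0; (-36)];
[:: 0; 0; (-6); 0; 0; 0; (-6); (-18); 0; (-36)];
[:: (-6); 0; (-3); 3; 3; 3; (-3); (-3); 12; (-30)];
[:: (-6); (-3); 0; 6; (-6); 3; (-3); (-3); 0; 18];
[:: 0; (-3); 3; 0; (-3); 6; (-9); (-9); (-6); 6];
[:: (-6); 3; 3; 3; 0; 3; (-3); (-21); (-6); 6];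
[:: (-6); (-3); 0; (-6); (-6); 3; (-3); (-3); 0; 18];
[:: 0; 0; (-3); (-3); (-3); 3; (-3); (-27); 0; 18];
[:: (-6); 0; 0; 0; 0; 6; 0; (-12); 12; 24];
[:: (-6); 3; (-3); 0; (-6); (-3); (-6); (-12); 0; 0];
[:: 0; 0; (-3); 3; (-3); 3; (-9); (-9); 12; 6];
[:: (-6); 3; 3; (-3); 0; 3; (-9); (-3); 6; (-6)];
[:: 0; (-6); 3; 6; 0; (-6); 3; 9; 0; 18];
[:: 6; (-6); 6; 0; 3; (-3); (-3); 3; (-6); 6];
[:: 0; 0; 6; 3; 6; (-6); 3; (-9); (-6); 6];
[:: 0; (-6); 3; (-6); 0; (-6); 3; 9; 0; 18];
[:: 6; (-3); 0; (-3); 3; (-6); 3; (-15); 0; 18];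
[:: 0; (-3); 3; 0; 6; (-3); 6; 0; 12; 24];
[:: 0; 0; 0; 0; 0; (-12); 0; 0; 0; 0];
[:: 6; (-3); 0; 3; 3; (-6); (-3); 3; 12; 6];
[:: 0; 0; 6; (-3); 6; (-6); (-3); 9; 6; (-6)];
[:: 0; (-6); 6; 0; (-3); (-3); 3; 9; (-6); (-30)];
[:: 6; (-3); 3; 3; 0; (-3); 3; (-15); (-6); (-30)];
[:: 0; (-3); 6; 6; 3; 0; 6; 0; 6; (-24)];
[:: 0; (-3); 0; (-3); (-3); (-6); 9; (-9); 0; (-18)];
[:: 6; (-6); 0; 0; 0; 0; 6; (-6); 12; (-12)];
[:: 0; (-3); 6; (-6); 3; 0; 6; 0; 6; (-24)];
[:: 0; (-3); 0; 3; (-3); (-6); 3; 9; 12; (-30)];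
[:: 6; (-3); 3; (-3); 0; (-3); (-3); 3; 6; (-42)];
[:: 0; 3; 3; 0; 3; (-6); 3; (-9); 6; (-42)];
[:: 0; 0; 6; 3; (-6); (-6); 3; (-9); (-6); 6];
[:: 6; (-3); 6; 6; (-3); 0; 0; (-6); 6; 12];
[:: 0; 0; 12; 0; 0; 0; 0; 0; 0; 0];
[:: 0; (-3); 3; 0; (-6); (-3); 6; 0; 12; 24];
[:: 6; (-3); 6; (-6); (-3); 0; 0; (-6); 6; 12];
[:: 0; 3; 6; (-3); 0; (-3); 6; (-18); 6; 12];
[:: 0; 0; 6; (-3); (-6); (-6); (-3); 9; 6; (-6)];
[:: 6; 3; 3; 0; (-3); (-6); (-3); (-15); 6; (-6)];
[:: 0; 3; 6; 3; 0; (-3); 0; 0; 18; 0];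
[:: 0; (-12); 0; 0; 0; 0; 0; 0; 0; 0];
[:: (-6); (-6); 0; 3; 3; (-3); 6; (-12); 0; 0];
[:: 0; (-6); 3; (-3); 6; 0; 0; (-18); (-6); (-12)];
[:: 0; (-6); (-3); 6; 0; (-6); (-3); (-9); 0; (-18)];
[:: (-6); (-3); 3; 0; 3; (-6); (-3); (-3); (-6); (-30)];
[:: 0; (-6); 3; 3; 6; 0; (-6); 0; 6; (-24)];
[:: 0; (-6); (-3); (-6); 0; (-6); (-3); (-9); 0; (-18)];
[:: (-6); (-6); 0; (-3); 3; (-3); 0; 6; 12; (-12)];
[:: 0; (-3); (-3); 0; 6; (-3); 0; (-18); 12; (-12)];
[:: 0; (-6); 0; 3; (-3); (-3); 0; (-18); 0; 36];
[:: (-6); (-3); 6; (-3); 0; (-3); 0; (-12); (-6); 24];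
[:: 0; (-6); 6; 0; 3; 3; (-3); (-9); 6; 30];
[:: 0; (-3); 3; 0; (-3); (-6); (-9); (-9); (-6); 6];
[:: (-6); (-3); 6; 3; 0; (-3); (-6); 6; 6; 12];
[:: 0; 0; 3; 6; 3; (-3); (-6); (-18); 6; 12];
[:: 0; (-6); 0; (-3); (-3); (-3); (-6); 0; 12; 24];
[:: (-6); 0; 0; 0; 0; (-6); 0; (-12); 12; 24];
[:: 0; 0; 3; (-6); 3; (-3); (-6); (-18); 6; 12];
[:: 0; (-6); 3; (-3); (-6); 0; 0; (-18); (-6); (-12)];
[:: (-6); (-6); 6; 0; (-3); 3; 3; (-3); 6; (-6)];
[:: 0; (-3); 3; 3; 0; 3; 3; (-27); 6; (-6)];
[:: 0; (-6); 3; 3; (-6); 0; (-6); 0; 6; (-24)];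
[:: (-6); 0; 3; 6; (-3); (-3); 0; (-12); 6; (-24)];
[:: 0; 0; 6; 0; 0; 0; (-6); (-18); 0; (-36)];
[:: 0; (-3); (-3); 0; (-6); (-3); 0; (-18); 12; (-12)];
[:: (-6); 0; 3; (-6); (-3); (-3); 0; (-12); 6; (-24)];
[:: 0; (-3); 3; (-3); 0; 3; (-3); (-9); 18; (-18)];
[:: (-4); 0; 6; (-6); 0; 0; 0; 4; 12; 24];
[:: 2; 6; 0; (-6); 0; 0; 0; 4; (-16); (-8)];
[:: 0; 0; 0; 0; 6; 6; (-6); (-18); 4; (-4)];
[:: (-6); 6; 0; 0; 6; 6; 0; 0; 0; 0];
[:: 6; 0; (-6); 0; 6; 0; 4; 0; 8; 16];
[:: 2; 6; (-6); 6; 0; 0; 6; (-2); 0; 12];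
[:: 0; (-6); 0; 0; 0; (-6); (-6); 18; 0; (-12)];
[:: 4; 0; (-6); 0; 0; 0; 2; (-10); (-8); 44];
[:: 2; 0; 0; 0; 0; 6; 8; 4; (-12); 24];
[:: (-2); 0; 0; 0; (-6); 0; (-2); (-10); (-16); 28];
[:: (-6); 0; (-6); 0; (-6); 0; 0; 12; (-8); 8];
[:: 4; (-6); 0; (-6); 6; 0; (-2); 2; 8; 4];
[:: (-2); (-6); 6; (-6); 0; 0; (-6); 2; 0; (-12)];
[:: (-2); 0; (-6); 6; 0; 6; 0; 8; 8; 16];
[:: (-2); 0; 0; (-6); 0; 6; (-6); 14; (-8); (-4)];
[:: 6; 0; (-6); 0; (-6); 0; 0; 12; (-8); 8];
[:: 2; 0; 0; (-6); (-6); 0; 0; 16; 4; 32];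
[:: (-4); 0; 0; (-6); 0; 0; (-6); (-14); (-12); (-12)];
[:: 6; 0; 0; (-6); 0; 6; 2; 6; 8; (-20)];
[:: 0; (-6); 6; 0; (-6); 0; (-2); 6; (-4); 28];
[:: (-2); 0; 6; 0; 6; 0; (-8); (-4); (-8); 8];
[:: 6; 6; 0; 6; 0; 0; (-4); 0; 8; 16];
[:: 6; 6; 0; 0; 0; 0; (-2); (-6); (-4); (-44)];
[:: (-4); 0; (-6); 6; 0; 0; 0; (-20); 4; 8];
[:: 6; (-6); 0; 0; 0; 0; 2; 6; 4; 44];
[:: (-2); (-6); 0; 0; 6; (-6); (-4); (-4); 0; 24];
[:: (-6); 0; (-6); 0; 6; 0; 4; 0; 8; 16];
[:: (-2); 6; (-6); 0; 0; 0; 0; (-16); (-12); 0];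
[:: 0; 6; 0; (-6); 6; 0; (-6); 6; 0; 12];
[:: (-4); 0; 0; (-6); 6; (-6); 4; (-8); 0; 0];
[:: 2; 0; 0; 0; 0; 6; 0; (-20); (-12); (-24)];
[:: 4; 6; 6; 0; (-6); 0; 2; 2; 4; 20];
[:: 2; 6; 0; 0; (-6); (-6); (-4); 4; (-8); 8];
[:: 4; 0; (-6); 0; 0; 0; (-6); 14; 8; 28];
[:: (-4); 0; 6; 0; 0; 0; (-2); 10; 8; (-44)];
[:: 2; 6; 0; 0; 0; 0; (-10); (-14); (-4); 4];
[:: 2; 0; 0; (-6); (-6); 0; (-8); (-8); 4; (-16)];
[:: (-2); 6; 0; (-6); 0; 0; 8; (-4); 0; (-24)];
[:: (-2); 6; 0; 0; 0; 0; (-2); (-22); 12; (-12)];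
[:: 6; 6; 0; 0; 6; 6; 0; 0; 0; 0];
[:: (-6); 6; 0; 0; 0; 0; (-2); (-6); (-4); (-44)];
[:: 0; (-6); 0; (-6); (-6); 0; 2; 6; 8; (-20)];
[:: 2; 0; 0; (-6); 0; (-6); 2; (-2); 16; (-4)];
[:: (-4); 0; 0; 0; (-6); 6; 6; 10; 4; 20];
[:: 0; 0; 0; 0; (-6); (-6); (-2); (-6); (-4); (-44)];
[:: 0; 6; 0; 6; 6; 0; (-2); (-6); (-8); 20];
[:: 6; 0; 0; 6; 0; (-6); (-2); (-6); (-8); 20];
[:: 4; 0; (-6); (-6); 0; 0; (-4); 8; (-4); (-32)];
[:: (-2); 0; 0; 0; 6; 0; 2; (-22); 0; 36];
[:: 6; 0; (-6); 0; 0; 6; (-6); (-6); (-4); 4];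
[:: 2; 6; 6; 6; 0; 0; 2; (-14); 0; (-12)];
[:: 4; 0; 0; (-6); 0; 0; 2; (-22); 4; (-28)];
[:: 2; 0; 6; 0; (-6); 0; 4; (-8); 8; (-32)];
[:: (-2); 0; 6; (-6); (-6); 0; 6; 2; (-4); 4];
[:: (-2); 0; 6; 6; 0; 6; (-4); (-4); 8; (-8)];
[:: (-6); 0; 6; 0; 6; 0; 0; (-12); 8; (-8)];
[:: (-6); 0; 6; 0; 0; 6; (-2); 6; (-4); 28];
[:: 4; 6; (-6); 0; (-6); 0; (-2); (-10); 4; (-4)];
[:: (-2); (-6); 0; 6; 0; 0; 0; (-4); 16; 8];
[:: 2; 0; 6; 6; 6; 0; (-2); 10; 4; 20];
[:: (-4); 6; 0; 6; (-6); 0; 2; (-2); (-8); (-4)];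
[:: (-2); (-6); (-6); 6; 0; 0; 2; 2; (-8); 20];
[:: (-6); 0; 0; 0; (-6); 0; 6; (-18); 0; 12];
[:: 0; 0; 0; (-6); 6; 6; 4; 0; (-8); (-16)];
[:: (-6); (-6); 0; 6; 0; 0; 0; 12; 0; (-24)];
[:: (-2); 0; 0; 0; 0; (-6); (-8); (-4); 12; (-24)];
[:: (-12); 0; 0; 0; 0; 0; 0; 0; 0; 0];
[:: (-4); 0; 0; 6; 0; 0; (-10); (-2); (-4); (-20)];
[:: (-4); (-6); 0; 0; 0; 6; (-6); 10; 8; 4];
[:: (-6); 0; 0; 0; 6; 0; (-6); 18; 0; (-12)];
[:: (-2); 0; 0; 0; 0; (-6); 0; (-28); (-4); (-8)];
[:: (-2); 0; (-6); (-6); 0; 6; 4; (-4); 0; 24];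
[:: 6; (-6); 0; 6; 0; 0; 0; 12; 0; (-24)];
[:: (-2); 0; 0; (-6); 6; 0; (-4); (-4); 4; (-40)];
[:: 0; (-6); 6; 0; 0; (-6); 0; (-12); 8; (-8)];
[:: 4; (-6); (-6); 0; 0; 6; 4; 8; 0; 0];
[:: 2; 0; (-6); (-6); 6; 0; (-2); (-14); (-4); 4];
[:: (-4); 0; 0; 6; 6; (-6); 0; 4; 8; (-8)];
[:: 4; 0; 6; 0; 0; 0; (-10); 2; 8; 4];
[:: 0; 0; 0; 0; (-6); (-6); 6; 18; (-4); 4];
[:: 2; 0; 0; (-6); 0; 6; (-6); (-2); 8; 28];
[:: 0; 6; 0; 0; 0; 6; (-2); 6; 16; (-4)];
[:: 2; 0; 0; 0; 0; 6; (-8); 4; 4; (-40)];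
[:: (-2); 0; 6; 0; 0; (-6); (-2); 14; (-12); 12];
[:: (-6); 0; 6; 0; 0; (-6); 6; 6; 4; (-4)];
[:: (-2); 6; 0; 0; 0; 0; 6; 2; 12; 36];
[:: 2; 0; 6; 6; 0; (-6); (-4); 4; 0; (-24)];
[:: 2; (-6); 0; 6; 0; 0; (-8); 4; 0; 24];
[:: 2; (-6); (-6); 0; 0; 0; 4; (-20); (-4); (-8)];
[:: 6; (-6); 0; 0; 0; 0; (-6); (-18); 4; (-4)];
[:: (-4); 0; 0; 0; 0; 0; (-8); (-8); 0; 48];
[:: (-4); 0; 6; 6; 0; 0; 4; (-8); 4; 32];
[:: 2; 0; 0; 6; (-6); 0; (-4); (-20); (-4); (-8)];
[:: 4; 0; 0; (-6); (-6); 6; 0; (-4); (-8); 8];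
[:: 2; 6; 6; (-6); 0; 0; (-2); (-2); 8; (-20)];
[:: (-6); 0; 0; (-6); 0; 6; 2; 6; 8; (-20)];
[:: 4; 0; 0; 6; 0; 0; (-2); (-10); 12; (-36)];
[:: (-6); (-6); 0; 0; 0; 0; (-6); (-18); 4; (-4)];
[:: (-4); 6; 6; 0; 0; (-6); (-4); (-8); 0; 0];
[:: (-4); 6; 0; (-6); (-6); 0; (-2); 10; 0; (-12)];
[:: 2; 0; (-6); 6; 0; (-6); 0; 16; 0; 0];
[:: 6; 0; (-6); 0; 0; (-6); 2; (-6); 4; (-28)];
[:: 0; 6; (-6); 0; 6; 0; 2; (-6); 4; (-28)];
[:: (-6); 6; 0; (-6); 0; 0; 0; (-12); 0; 24];
[:: (-4); 0; 0; 6; 0; 0; (-2); 22; (-4); 28];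
[:: 4; (-6); 6; 0; 0; 6; 0; (-4); 0; (-24)];
[:: 6; 0; 0; 0; (-6); 0; (-2); 6; 16; (-4)];
[:: (-2); 0; 0; 0; 0; (-6); 0; 20; 12; 24];
[:: (-6); (-6); 0; 0; 0; 0; 2; 6; 4; 44];
[:: (-2); 0; 6; 6; (-6); 0; 2; 14; 4; (-4)];
[:: 6; 6; 0; 0; 0; 0; 6; 18; (-4); 4];
[:: (-2); 0; (-6); (-6); (-6); 0; 2; (-10); (-4); (-20)];
[:: 2; (-6); 0; 0; 6; 6; (-4); 4; (-8); 8];
[:: 6; 0; 0; 0; 6; 0; 2; (-6); (-16); 4];
[:: (-2); 0; 0; 0; 0; (-6); 8; (-4); (-4); 40];
[:: 0; 0; 0; 6; (-6); (-6); (-4); 0; 8; 16];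
[:: (-2); 0; (-6); 0; (-6); 0; 0; (-4); 8; 40];
[:: 2; 0; 6; 0; 0; (-6); (-2); (-2); 4; 44];
[:: 0; 0; 0; 6; 6; 6; 0; 12; 0; (-24)];
[:: 2; 0; 0; 0; 0; 6; 0; 28; 4; 8];
[:: (-2); (-6); 0; 0; 6; 6; 4; (-4); 8; (-8)];
[:: (-2); 0; 0; (-6); 6; 0; 4; 20; 4; 8];
[:: 2; 0; 0; 0; 6; 0; 2; 10; 16; (-28)];
[:: 2; 0; 6; 0; 6; 0; 0; 4; (-8); (-40)];
[:: (-4); 0; 6; 0; 0; 0; 6; (-14); (-8); (-28)];
[:: 6; 0; 6; 0; 0; 6; (-2); 6; (-4); 28];
[:: 2; 0; (-6); 0; 0; (-6); (-6); (-14); 4; 20];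
[:: 4; 0; 0; 0; 0; 0; 0; (-16); 16; 32];
[:: (-6); 0; 0; 0; 6; 0; 2; (-6); (-16); 4];
[:: (-2); (-6); (-6); (-6); 0; 0; (-2); 14; 0; 12];
[:: 2; 0; 0; 6; 0; 6; (-2); (-14); 0; 36];
[:: (-2); (-6); 6; 6; 0; 0; (-2); (-10); (-8); (-4)];
[:: 4; 0; 0; 0; 0; 0; 8; 8; 0; (-48)];
[:: 6; 0; 0; 0; 6; 0; (-6); 18; 0; (-12)];
[:: 0; 6; (-6); 0; 0; 6; 0; 12; (-8); 8];
[:: 2; 0; (-6); 6; 6; 0; (-6); (-2); 4; (-4)];
[:: (-4); (-6); 6; 0; 6; 0; 2; 10; (-4); 4];
[:: 0; (-6); 0; 6; (-6); 0; 6; (-6); 0; (-12)];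
[:: 0; 0; 0; (-6); (-6); (-6); 0; (-12); 0; 24];
[:: (-4); (-6); (-6); 0; 6; 0; (-2); (-2); (-4); (-20)];
[:: 4; 0; 0; 0; 6; (-6); (-6); (-10); (-4); (-20)];
[:: (-6); 0; 6; 0; (-6); 0; (-4); 0; (-8); (-16)];
[:: 4; 0; 0; (-6); 0; 0; 10; 2; 4; 20];
[:: 2; 0; (-6); 0; 6; 0; 4; 16; (-8); (-16)];
[:: (-6); 0; (-6); 0; 0; 6; (-6); (-6); (-4); 4];
[:: 0; 0; 0; 0; 6; 6; 2; 6; 4; 44];
[:: (-2); 6; 0; 6; 0; 0; 4; 8; 8; (-32)];
[:: (-2); 0; 6; 0; (-6); 0; (-4); (-16); 8; 16];
[:: 2; 0; 6; (-6); 0; (-6); 0; (-8); (-8); (-16)];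
[:: 2; 6; 0; 0; 0; 0; (-2); 10; (-4); 52];
[:: (-2); 0; 6; (-6); 0; 6; 0; (-16); 0; 0];
[:: 0; 6; 6; 0; 6; 0; 6; 6; 4; (-4)];
[:: (-2); 0; 0; (-6); 0; (-6); 2; 14; 0; (-36)];
[:: (-2); 0; (-6); 0; 0; (-6); (-6); 2; (-12); (-12)];
[:: 2; 0; 0; 0; (-6); 0; (-2); 22; 0; (-36)];
[:: (-2); 0; 0; 6; 0; 6; (-2); 2; (-16); 4];
[:: 0; (-6); (-6); 0; 0; (-6); 4; 0; 8; 16];
[:: 2; (-6); (-6); 0; 0; 0; (-4); 4; 12; (-24)];
[:: 4; 0; 6; 0; 0; 0; (-2); (-22); (-8); 20];
[:: (-2); (-6); 0; 0; 0; 0; 2; (-10); 4; (-52)];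
[:: (-2); 6; 0; 0; 6; (-6); 0; 8; (-8); (-16)];
[:: 4; 0; (-6); 6; 0; 0; 0; (-4); (-12); (-24)];
[:: 2; 0; 0; 6; 0; (-6); 6; (-14); 8; 4];
[:: (-6); 0; 0; 0; (-6); 0; (-2); 6; 16; (-4)];
[:: (-2); 6; 0; 0; (-6); 6; (-4); (-4); 0; 24];
[:: 2; (-6); 0; 0; 0; 0; 2; 22; (-12); 12];
[:: 2; (-6); 0; 0; 6; (-6); 4; 4; 0; (-24)];
[:: 0; (-6); 0; 0; 0; (-6); 2; (-6); (-16); 4];
[:: (-2); 0; 6; 0; 0; 6; 6; 14; (-4); (-20)];
[:: 2; (-6); 0; (-6); 0; 0; (-4); (-8); (-8); 32];
[:: 6; 0; 6; 0; (-6); 0; (-4); 0; (-8); (-16)];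
[:: 4; 6; 0; 0; 0; (-6); (-2); 14; 8; (-20)];
[:: (-2); 0; (-6); 0; 0; 6; 2; 2; (-4); (-44)];
[:: 0; 6; 0; 0; 0; 6; 6; (-18); 0; 12];
[:: (-4); 0; 0; 0; 0; 0; 8; (-8); 16; (-16)];
[:: 2; 6; 0; 6; 0; 0; (-4); 16; (-8); (-16)];
[:: (-4); 0; (-6); 0; 0; 0; 10; (-2); (-8); (-4)];
[:: 2; (-6); 6; 0; 0; 0; 8; (-8); (-4); 16];
[:: (-4); 0; 0; 0; (-6); 6; (-2); (-14); 4; (-28)];
[:: 6; (-6); 0; 0; (-6); (-6); 0; 0; 0; 0];
[:: (-6); 0; 0; 6; 0; (-6); (-2); (-6); (-8); 20];
[:: 12; 0; 0; 0; 0; 0; 0; 0; 0; 0];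
[:: (-4); 6; (-6); 0; 0; (-6); 0; 4; 0; 24];
[:: 2; 6; (-6); (-6); 0; 0; 2; 10; 8; 4];
[:: (-2); (-6); 0; (-6); 0; 0; 4; (-16); 8; 16];
[:: (-2); 6; 6; 0; 0; 0; (-4); 20; 4; 8];
[:: 6; 0; 0; 0; (-6); 0; 6; (-18); 0; 12];
[:: 4; 0; 0; 0; 6; (-6); 2; 14; (-4); 28];
[:: 2; 0; (-6); (-6); 0; (-6); 4; 4; (-8); 8];
[:: (-2); 0; 0; 6; 6; 0; 0; (-16); (-4); (-32)];
[:: (-2); 6; 0; 0; (-6); (-6); 4; (-4); 8; (-8)];
[:: (-2); 6; 6; 0; 0; 0; 4; (-4); (-12); 24];
[:: 2; 0; 6; (-6); 6; 0; 2; (-2); (-4); 28];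
[:: 0; 6; 6; 0; 0; 6; (-4); 0; (-8); (-16)];
[:: 2; 6; 0; 0; (-6); 6; 4; 4; 0; (-24)];
[:: (-4); 0; 0; 0; 0; 0; 0; 16; (-16); (-32)];
[:: (-6); (-6); 0; (-6); 0; 0; 4; 0; (-8); (-16)];
[:: 2; (-6); 0; 0; 0; 0; (-6); (-2); (-12); (-36)];
[:: 2; 0; 0; 0; 6; 0; 10; (-14); 0; (-12)];
[:: 2; (-6); 6; 0; 0; 0; 0; 16; 12; 0];
[:: 4; (-6); 0; 6; 6; 0; 2; (-10); 0; 12];
[:: 6; 0; 6; 0; 6; 0; 0; (-12); 8; (-8)];
[:: (-2); 0; 0; 0; 6; 0; (-6); 2; 16; 20];
[:: (-2); (-6); 0; 0; 0; 0; 10; 14; 4; (-4)];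
[:: (-2); (-6); 0; 0; (-6); 6; 0; 8; (-8); (-16)];
[:: 2; 0; 0; 6; (-6); 0; 4; 4; (-4); 40];
[:: 6; 6; 0; (-6); 0; 0; 0; (-12); 0; 24];
[:: 6; (-6); 0; (-6); 0; 0; 4; 0; (-8); (-16)];
[:: 2; 0; (-6); 0; (-6); 0; 8; 4; 8; (-8)];
[:: (-6); 0; 0; 6; 0; 6; 6; (-6); 0; (-12)];
[:: 4; 0; 0; 6; (-6); 6; (-4); 8; 0; 0];
[:: 2; 0; 6; 0; 0; 6; 6; (-2); 12; 12];
[:: (-2); 0; 0; 0; (-6); 0; (-10); 14; 0; 12];
[:: 2; (-6); 0; 0; (-6); 6; 0; (-8); 8; 16];
[:: 0; (-6); (-6); 0; (-6); 0; (-6); (-6); (-4); 4];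
[:: (-2); 0; (-6); 0; 6; 0; (-4); 8; (-8); 32];
[:: 4; 0; 0; 6; 0; 0; 6; 14; 12; 12];
[:: 6; 0; 6; 0; 0; (-6); 6; 6; 4; (-4)];
[:: 4; 0; 6; (-6); 0; 0; 0; 20; (-4); (-8)];
[:: (-6); 6; 0; 6; 0; 0; (-4); 0; 8; 16];
[:: (-4); 0; 0; (-6); 0; 0; 2; 10; (-12); 36];
[:: 4; 0; 6; 6; 0; 0; 4; 8; (-12); 0];
[:: 4; 0; 0; 0; 0; 0; (-8); 8; (-16); 16];
[:: 6; 0; 0; 6; 0; 6; 6; (-6); 0; (-12)];
[:: (-2); 0; (-6); 6; (-6); 0; (-2); 2; 4; (-28)];
[:: (-2); 0; 0; 6; 0; (-6); 6; 2; (-8); (-28)];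
[:: 6; 0; 0; (-6); 0; (-6); (-6); 6; 0; 12];
[:: (-4); 0; (-6); 0; 0; 0; 2; 22; 8; (-20)];
[:: 2; 0; (-6); 0; 0; 6; 2; (-14); 12; (-12)];
[:: (-4); (-6); 0; 0; 0; 6; 2; (-14); (-8); 20];
[:: (-4); 0; (-6); (-6); 0; 0; (-4); (-8); 12; 0];
[:: (-6); 0; 0; (-6); 0; (-6); (-6); 6; 0; 12];
[:: (-2); 6; (-6); 0; 0; 0; (-8); 8; 4; (-16)];
[:: (-2); 0; 0; 6; 6; 0; 8; 8; (-4); 16];
[:: (-6); (-6); 0; 0; (-6); (-6); 0; 0; 0; 0];
[:: 2; 6; 0; 0; 6; (-6); 0; (-8); 8; 16];
[:: 4; 6; 0; 0; 0; (-6); 6; (-10); (-8); (-4)];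
[:: (-6); 6; 0; 0; 0; 0; 6; 18; (-4); 4];
[:: 2; 0; 0; 0; (-6); 0; 6; (-2); (-16); (-20)];
[:: (-6); 0; (-6); 0; 0; (-6); 2; (-6); 4; (-28)]])%Z.

Definition kiss10_gram (a b : seq Z) : Z := weighted_dotZ 10 kiss10_weights a b.

Lemma size_kiss10_coords : size kiss10_coords = 510.
Proof. by vm_compute. Qed.

Lemma kiss10_weights_ge0 : all (fun z : Z => 0 <= z) kiss10_weights.
Proof. by vm_compute. Qed.

Lemma kiss10_gram_diag :
  all (fun a => kiss10_gram a a == 4608%Z) kiss10_coords.
Proof. by vm_compute. Qed.

Lemma kiss10_gram_pairwise :
  pairwise (fun a b => kiss10_gram a b \in allowed_numerators) kiss10_coords.
Proof. by vm_compute. Qed.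

Definition kiss10_vector (R : realType) (i : nat) : 'rV[R]_10 :=
  weighted_row (fun k : 'I_10 => Z_to_R R kiss10_weights`_k / 4608%:R)
               (fun k => Z_to_R R (nth [::] kiss10_coords i)`_k).

Lemma dotp_kiss10_vector (R : realType) i j :
  dotp (kiss10_vector R i) (kiss10_vector R j) =
  Z_to_R R (kiss10_gram (nth [::] kiss10_coords i) (nth [::] kiss10_coords j))
    / 4608%:R.
Proof.
rewrite dotp_weighted_row => [|k]; last first.
  rewrite divr_ge0 ?ler0n // Z_to_R_ge0 //.
  by apply: (all_nthP 0%Z kiss10_weights_ge0).
rewrite Z_to_R_weighted_dotZ mulr_suml.
by apply: eq_bigr => k _; rewrite mulrA.
Qed.

Lemma kiss10_vector_unit (R : realType) (i : 'I_510) :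
  dotp (kiss10_vector R i) (kiss10_vector R i) = 1.
Proof.
have i_lt : (i < size kiss10_coords)%nat by rewrite size_kiss10_coords.
rewrite dotp_kiss10_vector.
have /eqP -> := all_nthP [::] kiss10_gram_diag i i_lt.
by rewrite Z_to_R_pos divff ?pnatr_eq0.
Qed.

Lemma kiss10_vector_ip (R : realType) (i j : 'I_510) : i != j ->
  dotp (kiss10_vector R i) (kiss10_vector R j) \in allowed_ips R.
Proof.
suff ip_lt (k l : 'I_510) : (k < l)%nat ->
    dotp (kiss10_vector R k) (kiss10_vector R l) \in allowed_ips R.
  by rewrite neq_ltn => /orP[/ip_lt // | /ip_lt]; rewrite dotpC.
move=> lt_kl; rewrite dotp_kiss10_vector allowed_ipsE.
apply: (map_f (fun z => Z_to_R R z / 4608%:R)).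
move/(pairwiseP [::]): kiss10_gram_pairwise; apply=> //;
  by rewrite inE size_kiss10_coords /= ltn_ord.
Qed.

Theorem mainTheorem6 (R : realType) :
  (exists v : 'I_510 -> 'rV[R]_10,
      injective v /\
      (forall i, dotp (v i) (v i) = 1) /\
      (forall i j, i != j -> dotp (v i) (v j) \in allowed_ips R))
  /\ kissing_number_ge R 10 510.
Proof.
pose v (i : 'I_510) := kiss10_vector R i.
have unit := kiss10_vector_unit R; have ip := kiss10_vector_ip R.
have config : kissing_config v by split=> // i j /ip /allowed_ips_le_half.
split; last by exists v.
by exists v; split; [exact: kissing_config_inj | split].
Qed.
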